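(* For all $n\ge 0$, $|F_n(321,1423,2143)|=\binom{n}{2}+1$.
   Context: A permutation $\pi$ avoids a classical pattern $p\in S_k$ if no subsequence of $\pi$ of length $k$ is order-isomorphic to $p$. A Fishburn permutation is a permutation $\pi=\pi_1\cdots\pi_n$ of $[n]$ for which there are no indices $i<j$ with $\pi_j<\pi_i<\pi_{i+1}$ and $\pi_i=\pi_j+1$. $F_n(\sigma_1,\dots,\sigma_k)$ denotes the set of Fishburn permutations of length $n$ avoiding each of the classical patterns $\sigma_1,\dots,\sigma_k$ (with $F_0$ containing only the empty permutation). *)

From mathcomp Require Import all_boot all_fingroup.
Set Implicit Arguments. Unset Strict Implicit. Unset Printing Implicit Defensive.

(* Permutations of [n] are represented as elements of 'S_n = {perm 'I_n};
   position i (0-based) holds value s i (0-based). *)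

Definition contains (n k : nat) (s : 'S_n) (p : 'S_k) : bool :=
  [exists f : {ffun 'I_k -> 'I_n},
    [forall a : 'I_k, forall b : 'I_k, (a < b) ==> (f a < f b)] &&
    [forall a : 'I_k, forall b : 'I_k, (s (f a) < s (f b)) == (p a < p b)]].

Definition avoids (n k : nat) (s : 'S_n) (p : 'S_k) : bool := ~~ contains s p.

Definition fishburn (n : nat) (s : 'S_n) : bool :=
  ~~ [exists i : 'I_n, exists j : 'I_n, exists i1 : 'I_n,
      [&& val i1 == (val i).+1, i < j, s j < s i, s i < s i1
        & val (s i) == (val (s j)).+1]].

Definition pat (k : nat) (l : seq nat) : 'S_k :=
  odflt 1%g [pick s : 'S_k | [forall i : 'I_k, val (s i) == nth 0 l i]].

Definition p321 : 'S_3 := pat 3 [:: 2; 1; 0].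
Definition p1423 : 'S_4 := pat 4 [:: 0; 3; 1; 2].
Definition p2143 : 'S_4 := pat 4 [:: 1; 0; 3; 2].

Definition F_321_1423_2143 (n : nat) : {set 'S_n} :=
  [set s : 'S_n | [&& fishburn s, avoids s p321, avoids s p1423
                    & avoids s p2143]].

From mathcomp Require Import all_boot all_fingroup zify.
Set Implicit Arguments. Unset Strict Implicit. Unset Printing Implicit Defensive.

(* Let h be a member of the class other than the identity, with first moved
   position a.  Fishburn-freeness and 321-avoidance force h (a+1) = a.  If
   h a = a+1, 2143-avoidance makes h increasing after a+1, hence the identity
   there: h is an adjacent transposition.  Otherwise 1423-avoidance forces
   a = 0; writing k = h 0, avoidance of 321 and 2143 makes the values below k
   and the values above k appear in increasing order, and 1423-avoidance keeps
   every value above k behind every value below k-1.  This leaves exactly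
   [k, 0, 1, ..., k-2, k+1, ..., L, k-1, L+1, ...] with k <= L.  Both families
   are indexed by the pairs x < y of positions, so the class has C(n,2)
   members besides the identity. *)

Lemma incr_gap (f : nat -> nat) lo hi :
  (forall i j, lo <= i -> i < j -> j <= hi -> f i < f j) ->
  lo <= hi -> f lo + (hi - lo) <= f hi.
Proof.
elim: hi => [|hi IH] f_incr lo_hi; first by rewrite (_ : lo = 0); lia.
case: (ltngtP lo hi.+1) => [lo_le_hi | | ->]; [| lia | by rewrite subnn addn0].
have := IH (fun i j li ij jh => f_incr i j li ij (leqW jh)) lo_le_hi.
have := f_incr hi hi.+1 lo_le_hi (ltnSn hi) (leqnn _); lia.
Qed.

Lemma inj_onto (m : nat) (f : nat -> nat) :
  (forall i, i < m -> f i < m) ->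
  (forall i j, i < m -> j < m -> f i = f j -> i = j) ->
  forall v, v < m -> exists2 i, i < m & f i = v.
Proof.
move=> f_lt f_inj v vm.
have f_uniq : uniq (map f (iota 0 m)).
  by rewrite map_inj_in_uniq ?iota_uniq // => i j; rewrite !mem_iota; apply: f_inj.
have f_sub : {subset map f (iota 0 m) <= iota 0 m}.
  by move=> w /mapP[i]; rewrite !mem_iota /= => /f_lt fi ->.
have [_ f_onto] := uniq_min_size f_uniq f_sub ltac:(by rewrite size_map).
have /mapP[i] : v \in map f (iota 0 m) by rewrite f_onto mem_iota.
by rewrite mem_iota => im ->; exists i.
Qed.

(* One-line notation, for x < y: the transposition of x and x.+1 if y = x.+1,
   and [x.+2, 0, 1, ..., x, x.+3, ..., y, x.+1, y.+1, ...] otherwise. *)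
Definition twist (x y i : nat) : nat :=
  if y == x.+1 then (if i == x then x.+1 else if i == x.+1 then x else i)
  else if i == 0 then x.+2 else if i <= x.+1 then i.-1
  else if i < y then i.+1 else if i == y then x.+1 else i.

Ltac twist_lia := rewrite /twist /=; repeat (case: ifP => /=); lia.

Lemma twist_le x y i : x < y -> i <= y -> twist x y i <= y.
Proof. twist_lia. Qed.

Lemma twist_id x y i : x < y -> y < i -> twist x y i = i.
Proof. twist_lia. Qed.

Lemma twist_lt n x y i : x < y -> y < n -> i < n -> twist x y i < n.
Proof. twist_lia. Qed.

Lemma twist_inj x y i j : x < y -> twist x y i = twist x y j -> i = j.
Proof. twist_lia. Qed.

Lemma twist_moves x y : x < y -> twist x y y != y.
Proof. by move=> xy; apply/eqP; twist_lia. Qed.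

Lemma twist_inversion x y i j : x < y -> i < j -> twist x y j < twist x y i ->
  y = x.+1 /\ i = x /\ j = x.+1 \/
  x.+1 < y /\ (i = 0 /\ (j <= x.+1 \/ j = y) \/ j = y /\ x.+1 < i).
Proof. twist_lia. Qed.

Lemma twist_inversion_0y x y : x.+1 < y -> twist x y y < twist x y 0.
Proof. twist_lia. Qed.

Section TwistAvoids.
Variables x y : nat.
Hypothesis x_lt_y : x < y.
Local Notation t := (twist x y).

Lemma twist_fishburn i j : i < j -> t i = (t j).+1 -> t i < t i.+1 -> False.
Proof. twist_lia. Qed.

Lemma twist_no321 i j k : i < j -> j < k -> t k < t j -> t j < t i -> False.
Proof.
move=> ij jk kj ji.
have := twist_inversion x_lt_y ij ji; have := twist_inversion x_lt_y jk kj.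
have := twist_inversion x_lt_y (ltn_trans ij jk) (ltn_trans kj ji); lia.
Qed.

Lemma twist_no1423 i j k l : i < j -> j < k -> k < l ->
  t i < t k -> t k < t l -> t l < t j -> False.
Proof.
move=> ij jk kl ik kl' lj.
have := twist_inversion x_lt_y jk (ltn_trans kl' lj).
have := twist_inversion x_lt_y (ltn_trans jk kl) lj; lia.
Qed.

Lemma twist_no2143 i j k l : i < j -> j < k -> k < l ->
  t j < t i -> t i < t l -> t l < t k -> False.
Proof.
move=> ij jk kl ji il lk.
have := twist_inversion x_lt_y ij ji; have := twist_inversion x_lt_y kl lk.
case: (ltnP x.+1 y) => [xy|]; last by lia.
move=> inv_kl inv_ij; have [i0 ly] : i = 0 /\ l = y by lia.
subst i l.
have := twist_inversion_0y xy; lia.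
Qed.

End TwistAvoids.

Lemma twist_params_inj n x y x' y' : x < y -> y < n -> x' < y' -> y' < n ->
  (forall i, i < n -> twist x y i = twist x' y' i) -> x = x' /\ y = y'.
Proof.
move=> xy yn xy' yn' eq_t.
have y_eq : y = y'.
  case: (ltngtP y y') => [lt|gt|//].
    by move: (twist_moves xy'); rewrite -eq_t // twist_id ?eqxx.
  by move: (twist_moves xy); rewrite eq_t // twist_id ?eqxx.
subst y'; split=> //.
have := eq_t 0 ltac:(lia); have := eq_t y yn; twist_lia.
Qed.

Section Classification.
Variables (n : nat) (h g : nat -> nat).
Hypothesis h_lt : forall i, i < n -> h i < n.
Hypothesis g_lt : forall v, v < n -> g v < n.
Hypothesis hK : forall i, i < n -> g (h i) = i.
Hypothesis gK : forall v, v < n -> h (g v) = v.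
Hypothesis no321 : forall i j k, i < j -> j < k -> k < n ->
  h k < h j -> h j < h i -> False.
Hypothesis no1423 : forall i j k l, i < j -> j < k -> k < l -> l < n ->
  h i < h k -> h k < h l -> h l < h j -> False.
Hypothesis no2143 : forall i j k l, i < j -> j < k -> k < l -> l < n ->
  h j < h i -> h i < h l -> h l < h k -> False.
Hypothesis no_fishburn : forall i j, i.+1 < n -> i < j -> j < n ->
  h i = (h j).+1 -> h i < h i.+1 -> False.

Lemma h_inj i j : i < n -> j < n -> h i = h j -> i = j.
Proof. by move=> iln jn e; rewrite -(hK iln) e hK. Qed.

Lemma h_inj_eq i j : i < n -> j < n -> (h i == h j) = (i == j).
Proof. by move=> iln jn; apply/eqP/eqP => [/h_inj|->]; [apply | ]. Qed.

Lemma g_eqE v i : v < n -> i < n -> (g v == i) = (h i == v).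
Proof. by move=> vn iln; apply/eqP/eqP => [<-|<-]; rewrite ?gK ?hK. Qed.

Lemma g_incr v w : v < w -> w < n -> (g w < g v -> h (g w) < h (g v)) -> g v < g w.
Proof.
move=> vw wn h_incr; have vn := ltn_trans vw wn.
case: (ltngtP (g v) (g w)) => [//|gt|eq].
- by have := h_incr gt; rewrite !gK //; lia.
- by have := congr1 h eq; rewrite !gK //; lia.
Qed.

Lemma fixed_after y : y < n -> (forall i, i <= y -> h i <= y) ->
  (forall i j, y < i -> i < j -> j < n -> h i < h j) ->
  forall i, y < i -> i < n -> h i = i.
Proof.
move=> yn h_le h_incr.
(* The positions up to y already take all the values up to y. *)
have h_gt i : y < i -> i < n -> y < h i.
  move=> yi iln; rewrite ltnNge; apply/negP => hiy.
  have h_inj_y j k : j < y.+1 -> k < y.+1 -> h j = h k -> j = k.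
    by move=> jy ky; apply: h_inj; apply: leq_trans yn.
  have [j jy hj] := inj_onto (m := y.+1) h_le h_inj_y hiy.
  by have := h_inj (leq_trans jy yn) iln hj; lia.
have g_gt v : y < v -> v < n -> y < g v.
  move=> yv vn; rewrite ltnNge; apply/negP => /h_le; rewrite gK //; lia.
move=> i yi iln; have n1 : n.-1 < n by lia.
have h_le_id : h i <= i.
  have h_top a b : i <= a -> a < b -> b <= n.-1 -> h a < h b.
    by move=> ia ab bn; apply: h_incr; lia.
  by have := incr_gap h_top ltac:(lia); have := h_lt n1; lia.
have id_le_h : i <= h i.
  have yhi := h_gt i yi iln; have hin := h_lt iln.
  have g_top a b : h i <= a -> a < b -> b <= n.-1 -> g a < g b.
    move=> ia ab bn; apply: g_incr => // [|gba]; first by lia.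
    by apply: h_incr => //; [apply: g_gt | apply: g_lt]; lia.
  by have := incr_gap g_top ltac:(lia); rewrite hK //; have := g_lt n1; lia.
lia.
Qed.

Lemma twist_of_prefix x y : x < y -> y < n ->
  (forall i, i <= y -> h i = twist x y i) ->
  (forall i j, y < i -> i < j -> j < n -> h i < h j) ->
  forall i, i < n -> h i = twist x y i.
Proof.
move=> xy yn h_prefix h_incr i iln.
case: (leqP i y) => [/h_prefix // | yi].
rewrite twist_id // (fixed_after yn) // => j jy.
by rewrite h_prefix // twist_le.
Qed.

Lemma identity_or_first_moved : (forall i, i < n -> h i = i) \/
  exists a, [/\ a < n, forall i, i < a -> h i = i & a < h a].
Proof.
case: (boolP [exists i : 'I_n, h i != i]) => [ex_moved | /existsPn all_fixed]; last first.
  by left=> i iln; apply/eqP; rewrite -[i]/(val (Ordinal iln)) (negbNE (all_fixed _)).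
have moved_ex : exists a, (a < n) && (h a != a).
  by case/existsP: ex_moved => i hi; exists i; rewrite ltn_ord.
right; case: (ex_minnP moved_ex) => a /andP[an /eqP ha] a_min.
have fixed_below i : i < a -> h i = i.
  move=> ia; case: (eqVneq (h i) i) => // hi.
  by have := a_min i; rewrite hi (ltn_trans ia an) => /(_ isT); lia.
exists a; split=> //; case: (ltngtP a (h a)) => [// | ha_lt | /esym/ha //].
by have := h_inj (h_lt an) an; rewrite fixed_below //; lia.
Qed.

Section FirstMoved.
Variable a : nat.
Hypotheses (a_lt_n : a < n) (fixed_below : forall i, i < a -> h i = i) (a_lt_ha : a < h a).

Lemma first_le_value i : a <= i -> i < n -> a <= h i.
Proof.
move=> ai iln; rewrite leqNgt; apply/negP => hia.
by have := h_inj (h_lt iln) iln (fixed_below hia); lia.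
Qed.

Lemma first_lt_pos v : a <= v -> v < n -> v != h a -> a < g v.
Proof.
move=> av vn v_ne; rewrite ltn_neqAle eq_sym g_eqE // eq_sym v_ne /=.
rewrite leqNgt; apply/negP => gva.
by have := fixed_below gva; rewrite gK //; lia.
Qed.

Lemma succ_first : a.+1 < n /\ h a.+1 = a.
Proof.
have ha_n := h_lt a_lt_n.
have p_gt : a < g a by apply: first_lt_pos => //; lia.
have a1n : a.+1 < n by have := g_lt a_lt_n; lia.
split=> //.
have j_gt : a < g (h a).-1 by apply: first_lt_pos; lia.
(* An ascent at a would be a Fishburn pattern with the position of h a - 1. *)
have lt_ha : h a.+1 < h a.
  case: (ltngtP (h a.+1) (h a)) => // [gt | eq].
  - by exfalso; apply: (no_fishburn a1n j_gt (g_lt _)); rewrite ?gK; lia.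
  - by have := h_inj a1n a_lt_n eq; lia.
have : h a.+1 <= a.
  rewrite leqNgt; apply/negP => a_lt.
  have p_ne : g a != a.+1 by rewrite g_eqE //; lia.
  have p_gt' : a.+1 < g a by lia.
  by apply: (no321 (ltnSn a) p_gt' (g_lt a_lt_n)); rewrite ?gK.
by have := first_le_value (leqnSn a) a1n; lia.
Qed.

Lemma transposition_case : h a = a.+1 -> forall i, i < n -> h i = twist a a.+1 i.
Proof.
move=> ha; have [a1n ha1] := succ_first.
apply: twist_of_prefix => // [i ia1 | i j a1i ij jn].
  rewrite /twist eqxx; case: ifP => [/eqP -> // | /negbT ia].
  by case: ifP => [/eqP -> // | /negbT ia1']; apply: fixed_below; lia.
have big j' : a.+1 < j' -> j' < n -> a.+1 < h j'.
  move=> a1j j'n; have := first_le_value (ltnW (ltnW a1j)) j'n.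
  by have := h_inj j'n a1n; have := h_inj j'n a_lt_n; rewrite ha ha1; lia.
have hi := big i a1i (ltn_trans ij jn); have hj := big j (ltn_trans a1i ij) jn.
case: (ltngtP (h i) (h j)) => // [gt | eq].
- by exfalso; apply: (no2143 (ltnSn a) a1i ij jn); rewrite ?ha ?ha1; lia.
- by have := h_inj (ltn_trans ij jn) jn eq; lia.
Qed.

Lemma first_moved_zero : a.+1 < h a -> a = 0.
Proof.
move=> a1_lt; have [a1n ha1] := succ_first.
(* Otherwise 0, a, a.+1 and the position of a.+1 form a 1423. *)
case: (posnP a) => // a_pos; exfalso.
have qn : a.+1 < n by have := h_lt a_lt_n; lia.
have q_ne : g a.+1 != a.+1 by rewrite g_eqE // ha1; lia.
have q_gt : a.+1 < g a.+1.
  by have := first_lt_pos (leqnSn a) qn ltac:(lia); lia.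
apply: (no1423 a_pos (ltnSn a) q_gt (g_lt qn)); rewrite ?gK ?ha1 ?(fixed_below a_pos); lia.
Qed.

End FirstMoved.

Section CycleCase.
Variable k : nat.
Hypotheses (one_lt_n : 1 < n) (h0 : h 0 = k) (h1 : h 1 = 0) (one_lt_k : 1 < k).
Local Notation L := (g k.-1).

Lemma k_lt_n : k < n.
Proof. by rewrite -h0; apply/h_lt/ltnW. Qed.

Lemma g_zero : g 0 = 1.
Proof. by have := hK one_lt_n; rewrite h1. Qed.

Lemma small_incr i j : 0 < i -> i < j -> j < n -> h i < k -> h j < k -> h i < h j.
Proof.
move=> i0 ij jn hik hjk; case: (ltngtP (h i) (h j)) => // [gt | eq].
- by exfalso; apply: (no321 i0 ij jn gt); rewrite h0.
- by have := h_inj (ltn_trans ij jn) jn eq; lia.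
Qed.

Lemma big_incr i j : 1 < i -> i < j -> j < n -> k < h i -> k < h j -> h i < h j.
Proof.
move=> i1 ij jn hik hjk; case: (ltngtP (h i) (h j)) => // [gt | eq].
- by exfalso; apply: (no2143 (ltn0Sn 0) i1 ij jn); rewrite ?h0 ?h1; lia.
- by have := h_inj (ltn_trans ij jn) jn eq; lia.
Qed.

Lemma small_pos_incr v w : v < w -> w < k -> g v < g w.
Proof.
move=> vw wk; have wn := ltn_trans wk k_lt_n; have vn := ltn_trans vw wn.
have gw0 : g w != 0 by rewrite g_eqE ?h0 //; lia.
apply: g_incr => // gwv.
by apply: small_incr; rewrite ?gK ?g_lt //; lia.
Qed.

Lemma big_pos_incr v w : k < v -> v < w -> w < n -> g v < g w.
Proof.
move=> kv vw wn; have vn := ltn_trans vw wn.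
have gw0 : g w != 0 by rewrite g_eqE ?h0 //; lia.
have gw1 : g w != 1 by rewrite g_eqE ?h1 //; lia.
apply: g_incr => // gwv.
by apply: big_incr; rewrite ?gK ?g_lt //; lia.
Qed.

Lemma no_big_before_small q r : 1 < q -> q < r -> r < n -> k < h q -> h r < k.-1 -> False.
Proof.
move=> q1 qr rn kq rk; have hr1n : (h r).+1 < n by have := k_lt_n; lia.
have hr0 : h r != 0 by rewrite -h1 h_inj_eq //; lia.
have rt : r < g (h r).+1.
  by have := small_pos_incr (ltnSn (h r)) ltac:(lia); rewrite hK.
by apply: (no1423 q1 qr rt (g_lt hr1n)); rewrite ?gK ?h1 //; lia.
Qed.

Lemma prefix_small i : 0 < i -> i < k -> h i < k.-1.
Proof.
move=> i0 ik; have kn := k_lt_n; have iln : i < n by lia.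
have k2n : k.-2 < n by lia.
have hm : h (g k.-2) = k.-2 := gK k2n.
have m_ge : k.-1 <= g k.-2.
  have g_small v w : 0 <= v -> v < w -> w <= k.-2 -> g v < g w.
    by move=> _ vw wk; apply: small_pos_incr; lia.
  by have := incr_gap g_small (leq0n _); rewrite g_zero; lia.
have m_lt_L : g k.-2 < L by apply: small_pos_incr; lia.
(* i <= g k.-2 < L, and no value above k may precede the value k-2. *)
have hi_k : h i != k by rewrite -h0 h_inj_eq //; lia.
have hi_k1 : h i != k.-1 by rewrite -g_eqE //; lia.
case: (ltnP (h i) k.-1) => // hi_ge; exfalso.
have hik : k < h i by lia.
have im : i != g k.-2 by apply: contraTneq hik => ->; rewrite hm; lia.
have i1 : i != 1 by apply: contraTneq hik => ->; rewrite h1.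
apply: (no_big_before_small _ _ (g_lt k2n) hik); rewrite ?hm; lia.
Qed.

Lemma prefix_values i : 0 < i -> i < k -> h i = i.-1.
Proof.
move=> i0 ik; have iln : i < n by have := k_lt_n; lia.
have lower : i.-1 <= h i.
  have h_small a b : 1 <= a -> a < b -> b <= i -> h a < h b.
    by move=> a1 ab bi; apply: small_incr; try lia;
      apply: ltn_trans (prefix_small _ _) _; lia.
  by have := incr_gap h_small i0; rewrite h1; lia.
have upper : h i <= i.-1.
  have hik := prefix_small i0 ik.
  have g_small v w : 0 <= v -> v < w -> w <= h i -> g v < g w.
    by move=> _ vw wi; apply: small_pos_incr; lia.
  by have := incr_gap g_small (leq0n _); rewrite hK // g_zero; lia.
lia.
Qed.

Lemma k_le_L : k <= L.
Proof.
have hk1 : h k.-1 = k.-2 by rewrite prefix_values //; lia.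
have := small_pos_incr (v := k.-2) (w := k.-1) ltac:(lia) ltac:(lia).
by rewrite -hk1 hK //; have := k_lt_n; lia.
Qed.

Lemma big_after i : k <= i -> i < n -> i != L -> k < h i.
Proof.
move=> ki iln iL; have kn := k_lt_n.
have hi_k : h i != k by rewrite -h0 h_inj_eq //; lia.
have hi_k1 : h i != k.-1 by apply: contra iL => /eqP <-; rewrite hK.
case: (ltnP (h i) k.-1) => [small|]; last by lia.
have := prefix_values (i := (h i).+1) (ltn0Sn _) ltac:(lia) => /= /(h_inj _ iln).
by have := h_lt iln; lia.
Qed.

Lemma middle_values i : k <= i -> i < L -> h i = i.+1.
Proof.
move=> ki iL; have kn := k_lt_n; have Ln : L < n by apply: g_lt; lia.
have iln : i < n by lia.
have big j : k <= j -> j <= i -> k < h j.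
  by move=> kj ji; apply: big_after; lia.
have lower : i.+1 <= h i.
  have h_big a b : k <= a -> a < b -> b <= i -> h a < h b.
    by move=> ka ab bi; apply: big_incr; try apply: big; lia.
  by have := incr_gap h_big ki; have := big k (leqnn k) ki; lia.
have upper : h i <= i.+1.
  have hik := big i ki (leqnn i); have k1n : k.+1 < n by have := h_lt iln; lia.
  have g_k1 : k <= g k.+1.
    rewrite leqNgt; apply/negP => gk1; have := gK k1n.
    case: (posnP (g k.+1)) => [-> | g_pos]; first by rewrite h0; lia.
    by rewrite prefix_values //; lia.
  have g_big v w : k.+1 <= v -> v < w -> w <= h i -> g v < g w.
    by move=> kv vw wi; apply: big_pos_incr; have := h_lt iln; lia.
  by have := incr_gap g_big hik; rewrite hK //; lia.
lia.
Qed.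

Lemma cycle_case : forall i, i < n -> h i = twist k.-2 (L) i.
Proof.
have kL := k_le_L; have kn := k_lt_n; have Ln : L < n by apply: g_lt; lia.
apply: twist_of_prefix => // [|i iL | i j Li ij jn]; first by lia.
- case: (posnP i) => [-> | i0]; first by rewrite h0; twist_lia.
  case: (ltnP i k) => [ik | ki]; first by rewrite prefix_values //; twist_lia.
  case: (ltnP i (L)) => [iL' | Li]; first by rewrite middle_values //; twist_lia.
  have -> : i = L by lia.
  by rewrite gK; [twist_lia | lia].
- by apply: big_incr; try apply: big_after; lia.
Qed.

End CycleCase.

Lemma classification : (forall i, i < n -> h i = i) \/
  exists x y, [/\ x < y, y < n & forall i, i < n -> h i = twist x y i].
Proof.
case: identity_or_first_moved => [|[a [an fixed ha]]]; [by left | right].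
have [a1n ha1] := succ_first an fixed ha.
case: (eqVneq (h a) a.+1) => [ha_eq | ha_ne].
  by exists a, a.+1; split=> //; apply: transposition_case.
have a0 := first_moved_zero an fixed ha ltac:(lia); subst a.
have one_lt_k : 1 < h 0 by lia.
exists (h 0).-2, (g (h 0).-1); split; last exact: cycle_case.
- by have := k_le_L a1n erefl ha1 one_lt_k; lia.
- by apply: g_lt; have := h_lt (ltnW a1n); lia.
Qed.
End Classification.

Definition natf m m' (f : 'I_m -> 'I_m') (i : nat) : nat :=
  oapp (fun o => val (f o)) i (insub i).

Lemma natfE m m' (f : 'I_m -> 'I_m') (o : 'I_m) : natf f o = f o.
Proof. by rewrite /natf valK. Qed.

Lemma natf_ord m m' (f : 'I_m -> 'I_m') i (lt_i_m : i < m) : natf f i = f (Ordinal lt_i_m).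
Proof. by rewrite -natfE. Qed.

Lemma natf_lt n (s : 'S_n) i : i < n -> natf s i < n.
Proof. by move=> iln; rewrite (natf_ord s iln). Qed.

Lemma natfK n (s : 'S_n) i : i < n -> natf (s^-1)%g (natf s i) = i.
Proof. by move=> iln; rewrite (natf_ord s iln) natfE permK. Qed.

Lemma natf_pat k (l : seq nat) : size l = k -> uniq l -> all (gtn k) l ->
  forall a, a < k -> natf (pat k l) a = nth 0 l a.
Proof.
move=> size_l uniq_l l_lt.
have nth_lt a : a < k -> nth 0 l a < k.
  by move=> ak; apply: (allP l_lt); rewrite mem_nth ?size_l.
pose f (a : 'I_k) : 'I_k := insubd a (nth 0 l a).
have f_val a : val (f a) = nth 0 l a by rewrite val_insubd nth_lt.
have f_inj : injective f.
  move=> a b /(congr1 val); rewrite !f_val => /eqP.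
  by rewrite nth_uniq ?size_l // => /eqP /val_inj.
move=> a ak; rewrite (natf_ord _ ak) /pat.
case: pickP => [s /forallP /(_ (Ordinal ak)) /eqP //|].
by move/(_ (perm f_inj)) => /forallP[] b; rewrite permE f_val.
Qed.

Lemma p321E a : a < 3 -> natf p321 a = nth 0 [:: 2; 1; 0] a.
Proof. exact: natf_pat. Qed.
Lemma p1423E a : a < 4 -> natf p1423 a = nth 0 [:: 0; 3; 1; 2] a.
Proof. exact: natf_pat. Qed.
Lemma p2143E a : a < 4 -> natf p2143 a = nth 0 [:: 1; 0; 3; 2] a.
Proof. exact: natf_pat. Qed.

Lemma containsP n k (s : 'S_n) (p : 'S_k) : contains s p <->
  exists f : nat -> nat, [/\ forall a b, a < b -> b < k -> f a < f b,
    forall a, a < k -> f a < n &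
    forall a b, a < k -> b < k -> (natf s (f a) < natf s (f b)) = (natf p a < natf p b)].
Proof.
split.
- case/existsP => F /andP[/forallP F_incr /forallP F_iso]; exists (natf F); split.
  + move=> a b ab bk; have ak := ltn_trans ab bk.
    by rewrite (natf_ord F ak) (natf_ord F bk); apply: (implyP (forallP (F_incr _) _)).
  + by move=> a ak; rewrite (natf_ord F ak).
  + move=> a b ak bk; rewrite (natf_ord F ak) (natf_ord F bk).
    by rewrite (natf_ord p ak) (natf_ord p bk) !natfE; apply: eqP (forallP (F_iso _) _).
- case=> f [f_incr f_lt f_iso]; apply/existsP.
  exists [ffun a : 'I_k => Ordinal (f_lt a (ltn_ord a))].
  apply/andP; split; apply/forallP => a; apply/forallP => b; rewrite !ffunE.
  + by apply/implyP => ab; apply: f_incr.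
  + by rewrite -!natfE /= f_iso.
Qed.

Lemma contains321P n (s : 'S_n) : contains s p321 <->
  exists i j k, [/\ i < j, j < k, k < n, natf s k < natf s j & natf s j < natf s i].
Proof.
rewrite containsP; split.
- case=> f [f_incr f_lt f_iso]; exists (f 0), (f 1), (f 2).
  by split; rewrite ?f_incr ?f_lt ?f_iso ?p321E.
- case=> i [j [k [ij jk kn hkj hji]]]; exists (nth 0 [:: i; j; k]); split.
  + by case=> [|[|[|a]]] [|[|[|b]]] //=; lia.
  + by case=> [|[|[|a]]] //=; lia.
  + by case=> [|[|[|a]]] [|[|[|b]]] //= _ _; rewrite !p321E /=; lia.
Qed.

Lemma contains1423P n (s : 'S_n) : contains s p1423 <->
  exists i j k l, [/\ i < j, j < k, k < l, l < n &
    [/\ natf s i < natf s k, natf s k < natf s l & natf s l < natf s j]].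
Proof.
rewrite containsP; split.
- case=> f [f_incr f_lt f_iso]; exists (f 0), (f 1), (f 2), (f 3).
  by split; rewrite ?f_incr ?f_lt //; split; rewrite ?f_iso ?p1423E.
- case=> i [j [k [l [ij jk kl ln [hik hkl hlj]]]]]; exists (nth 0 [:: i; j; k; l]); split.
  + by case=> [|[|[|[|a]]]] [|[|[|[|b]]]] //=; lia.
  + by case=> [|[|[|[|a]]]] //=; lia.
  + by case=> [|[|[|[|a]]]] [|[|[|[|b]]]] //= _ _; rewrite !p1423E /=; lia.
Qed.

Lemma contains2143P n (s : 'S_n) : contains s p2143 <->
  exists i j k l, [/\ i < j, j < k, k < l, l < n &
    [/\ natf s j < natf s i, natf s i < natf s l & natf s l < natf s k]].
Proof.
rewrite containsP; split.
- case=> f [f_incr f_lt f_iso]; exists (f 0), (f 1), (f 2), (f 3).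
  by split; rewrite ?f_incr ?f_lt //; split; rewrite ?f_iso ?p2143E.
- case=> i [j [k [l [ij jk kl ln [hji hil hlk]]]]]; exists (nth 0 [:: i; j; k; l]); split.
  + by case=> [|[|[|[|a]]]] [|[|[|[|b]]]] //=; lia.
  + by case=> [|[|[|[|a]]]] //=; lia.
  + by case=> [|[|[|[|a]]]] [|[|[|[|b]]]] //= _ _; rewrite !p2143E /=; lia.
Qed.

Lemma fishburnP n (s : 'S_n) : fishburn s <->
  forall i j, i.+1 < n -> i < j -> j < n ->
    natf s i = (natf s j).+1 -> natf s i < natf s i.+1 -> False.
Proof.
split.
- move=> /negP fish i j i1n ij jn e lt; apply: fish; have iln := ltn_trans (ltnSn i) i1n.
  apply/existsP; exists (Ordinal iln); apply/existsP; exists (Ordinal jn).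
  apply/existsP; exists (Ordinal i1n); apply/and5P; split=> //.
  + by rewrite -!natfE /= e.
  + by rewrite -!natfE.
  + by apply/eqP; move: e; rewrite (natf_ord s iln) (natf_ord s jn).
- move=> no_fish; apply/negP => /existsP[i /existsP[j /existsP[i1]]].
  case/and5P=> /eqP e1 ij ji ii1 /eqP e.
  have i1E : natf s i.+1 = s i1 by rewrite -e1 natfE.
  apply: (no_fish i j); rewrite ?i1E ?natfE //; simpl in e1; have := ltn_ord i1; lia.
Qed.

Definition twist_fun n (p : 'I_n * 'I_n) (i : 'I_n) : 'I_n :=
  if p.1 < p.2 then insubd i (twist p.1 p.2 i) else i.

Lemma twist_fun_inj n (p : 'I_n * 'I_n) : injective (twist_fun p).
Proof.
move=> i j; rewrite /twist_fun; case: ifP => // lt12.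
by move/(congr1 val); rewrite !val_insubd !twist_lt // => /(twist_inj lt12)/val_inj.
Qed.

Definition twist_perm n (p : 'I_n * 'I_n) : 'S_n := perm (@twist_fun_inj n p).

Lemma natf_twist_perm n (p : 'I_n * 'I_n) i : p.1 < p.2 -> i < n ->
  natf (twist_perm p) i = twist p.1 p.2 i.
Proof.
by move=> lt12 iln; rewrite (natf_ord _ iln) permE /twist_fun lt12 val_insubd twist_lt.
Qed.

Lemma natf1 n i : i < n -> natf (1%g : 'S_n) i = i.
Proof. by move=> iln; rewrite (natf_ord _ iln) perm1. Qed.

Lemma mem_F n (s : 'S_n) :
  (forall i j, i.+1 < n -> i < j -> j < n ->
     natf s i = (natf s j).+1 -> natf s i < natf s i.+1 -> False) ->
  (forall i j k, i < j -> j < k -> k < n ->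
     natf s k < natf s j -> natf s j < natf s i -> False) ->
  (forall i j k l, i < j -> j < k -> k < l -> l < n ->
     natf s i < natf s k -> natf s k < natf s l -> natf s l < natf s j -> False) ->
  (forall i j k l, i < j -> j < k -> k < l -> l < n ->
     natf s j < natf s i -> natf s i < natf s l -> natf s l < natf s k -> False) ->
  s \in F_321_1423_2143 n.
Proof.
move=> fish no321 no1423 no2143; rewrite inE; apply/and4P; split.
- exact/fishburnP.
- by apply/negP => /contains321P[i [j [k [ij jk kn kj ji]]]]; apply: (no321 i j k).
- by apply/negP => /contains1423P[i [j [k [l [ij jk kl ln []]]]]]; apply: (no1423 i j k l).
- by apply/negP => /contains2143P[i [j [k [l [ij jk kl ln []]]]]]; apply: (no2143 i j k l).
Qed.

Lemma one_in_F n : 1%g \in F_321_1423_2143 n.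
Proof.
by apply: mem_F => [i j ? ? ? | i j k ? ? ? | i j k l ? ? ? ? | i j k l ? ? ? ?];
  rewrite !natf1; lia.
Qed.

Lemma twist_perm_in_F n (p : 'I_n * 'I_n) : p.1 < p.2 -> twist_perm p \in F_321_1423_2143 n.
Proof.
move=> lt12; have p2n := ltn_ord p.2.
apply: mem_F => [i j ? ij jn | i j k ij jk kn | i j k l ij jk kl ln | i j k l ij jk kl ln];
  rewrite !natf_twist_perm //; try lia.
- exact: twist_fishburn.
- exact: twist_no321.
- exact: twist_no1423.
- exact: twist_no2143.
Qed.

Lemma F_cases n (s : 'S_n) : s \in F_321_1423_2143 n ->
  s = 1%g \/ exists2 p : 'I_n * 'I_n, p.1 < p.2 & s = twist_perm p.
Proof.
rewrite inE => /and4P[/fishburnP fish /negP no321 /negP no1423 /negP no2143].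
have natfKV v : v < n -> natf s (natf (s^-1)%g v) = v.
  by move=> vn; rewrite -{1}[s]invgK natfK.
case: (classification (natf_lt s) (natf_lt (s^-1)%g) (natfK s) natfKV) => //.
- by move=> i j k *; apply: no321; apply/contains321P; exists i, j, k.
- by move=> i j k l *; apply: no1423; apply/contains1423P; exists i, j, k, l.
- by move=> i j k l *; apply: no2143; apply/contains2143P; exists i, j, k, l.
- move=> s_id; left; apply/permP => i.
  by apply: val_inj => /=; rewrite perm1 -natfE s_id.
- case=> x [y [xy yn s_twist]]; right.
  exists (Ordinal (ltn_trans xy yn), Ordinal yn) => //.
  by apply/permP => i; apply: val_inj => /=; rewrite -!natfE s_twist // natf_twist_perm.
Qed.

Definition ltn_pairs n : {set 'I_n * 'I_n} := [set p : 'I_n * 'I_n | p.1 < p.2].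

Lemma card_ltn_pairs n : #|ltn_pairs n| = 'C(n, 2).
Proof.
rewrite -bin2_sum big_mkord -sum1_card.
rewrite (eq_bigl (fun p : 'I_n * 'I_n => p.1 < p.2)); last by move=> p; rewrite inE.
rewrite -(pair_big_dep xpredT (fun i j : 'I_n => i < j) (fun _ _ => 1)) /=.
rewrite (exchange_big_dep xpredT) //=; apply: eq_bigr => j _.
rewrite -(big_ord_widen_cond n (fun _ => true) (fun _ => 1) (ltnW (ltn_ord j))).
by rewrite -[RHS]card_ord -sum1_card.
Qed.

Lemma F_321_1423_2143E n : F_321_1423_2143 n = 1%g |: (@twist_perm n @: ltn_pairs n).
Proof.
apply/setP => s; rewrite in_setU1; apply/idP/idP.
- by case/F_cases => [-> | [p lt12 ->]]; rewrite ?eqxx // orbC imset_f ?inE.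
- case/orP => [/eqP -> | /imsetP[p]]; first exact: one_in_F.
  by rewrite inE => lt12 ->; apply: twist_perm_in_F.
Qed.

Lemma one_notin_twist_perms n : (1%g : 'S_n) \notin @twist_perm n @: ltn_pairs n.
Proof.
apply/imsetP => -[p]; rewrite inE => lt12 /(congr1 (fun s : 'S_n => natf s p.2)).
by rewrite natf1 // natf_twist_perm // => /esym/eqP; apply/negP/twist_moves.
Qed.

Lemma twist_perm_inj n : {in ltn_pairs n &, injective (@twist_perm n)}.
Proof.
move=> [x y] [x' y']; rewrite !inE /= => xy xy' eq_p.
have eq_t i : i < n -> twist x y i = twist x' y' i.
  move=> iln; rewrite -(natf_twist_perm (p := (x, y))) //.
  by rewrite -(natf_twist_perm (p := (x', y'))) // eq_p.
by have [/val_inj -> /val_inj ->] := twist_params_inj xy (ltn_ord y) xy' (ltn_ord y') eq_t.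
Qed.

Theorem mainTheorem9 (n : nat) : #|F_321_1423_2143 n| = 'C(n, 2) + 1.
Proof.
rewrite F_321_1423_2143E cardsU1 one_notin_twist_perms card_in_imset.
  by rewrite card_ltn_pairs addnC.
exact: twist_perm_inj.
Qed.
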